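(* Let $\Gamma$ be a group and $\sigma\in\mathrm{Aut}(\Gamma)$ such that $\Gamma\rtimes_\sigma\mathbb Z$ is finitely generated, and let $G$ be a finite group. Then (i) $\mathrm{Hom}_\sigma(\Gamma,G)$ is finite, and (ii) $\frac{1}{|G|}\#\mathrm{Hom}(\Gamma\rtimes_\sigma\mathbb Z,G)=\#\big(\mathrm{Hom}_\sigma(\Gamma,G)/G\big)$; in particular $|G|$ divides $\#\mathrm{Hom}(\Gamma\rtimes_\sigma\mathbb Z,G)$.
   Context: $G$ acts on $\mathrm{Hom}(\Gamma,G)$ by conjugation, $(h\cdot\phi)(\gamma)=h\phi(\gamma)h^{-1}$. For $\sigma\in\mathrm{Aut}(\Gamma)$ set $\phi^\sigma(\gamma)=\phi(\sigma^{-1}\gamma)$, and let $\mathrm{Hom}_\sigma(\Gamma,G)$ be the set of $\phi\in\mathrm{Hom}(\Gamma,G)$ with $\phi^\sigma$ conjugate to $\phi$ by an element of $G$; it is stable under the $G$-action and $\mathrm{Hom}_\sigma(\Gamma,G)/G$ denotes its set of orbits. $\Gamma\rtimes_\sigma\mathbb Z$ is the semidirect product where the generator $1\in\mathbb Z$ acts on $\Gamma$ by $\sigma$. *)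

From Stdlib Require Import ZArith List.
From mathcomp Require Import all_boot all_fingroup.

Set Implicit Arguments.
Unset Strict Implicit.
Unset Printing Implicit Defensive.

Record Grp := {
  gcar :> Type;
  gmul : gcar -> gcar -> gcar;
  gone : gcar;
  ginv : gcar -> gcar;
  gmulA : forall x y z, gmul x (gmul y z) = gmul (gmul x y) z;
  gmul1 : forall x, gmul gone x = x;
  gmulV : forall x, gmul (ginv x) x = gone }.

Record GrpAut (Γ : Grp) := {
  afun : Γ -> Γ;
  ainv : Γ -> Γ;
  afunK : cancel afun ainv;
  ainvK : cancel ainv afun;
  afunM : forall x y, afun (gmul x y) = gmul (afun x) (afun y) }.

Definition autpow (Γ : Grp) (s : GrpAut Γ) (m : Z) : Γ -> Γ :=
  match m with
  | Z0 => id
  | Zpos p => ssrnat.iter (Pos.to_nat p) (afun s)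
  | Zneg p => ssrnat.iter (Pos.to_nat p) (ainv s)
  end.

(* The semidirect product Gamma ⋊_sigma Z on Gamma * Z:
   (g,m)(h,n) = (g sigma^m(h), m+n); so t γ t^-1 = sigma(γ) for t = (1,1). *)
Definition sd_mul (Γ : Grp) (s : GrpAut Γ) (x y : Γ * Z) : Γ * Z :=
  (gmul x.1 (autpow s x.2 y.1), (x.2 + y.2)%Z).
Definition sd_one (Γ : Grp) : Γ * Z := (gone Γ, 0%Z).
Definition sd_inv (Γ : Grp) (s : GrpAut Γ) (x : Γ * Z) : Γ * Z :=
  (autpow s (- x.2) (ginv x.1), (- x.2)%Z).

Inductive generated (T : Type) (mul : T -> T -> T) (one : T) (inv : T -> T)
    (S : list T) : T -> Prop :=
  | gen_in : forall x, List.In x S -> generated mul one inv S x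
  | gen_one : generated mul one inv S one
  | gen_mul : forall x y, generated mul one inv S x ->
      generated mul one inv S y -> generated mul one inv S (mul x y)
  | gen_inv : forall x, generated mul one inv S x ->
      generated mul one inv S (inv x).

Definition fingen (T : Type) (mul : T -> T -> T) (one : T) (inv : T -> T) :=
  exists S : list T, forall x, generated mul one inv S x.

Definition is_hom (T : Type) (mul : T -> T -> T) (gT : finGroupType)
    (f : T -> gT) : Prop :=
  forall x y, f (mul x y) = (f x * f y)%g.

Definition conj_hom (T : Type) (gT : finGroupType) (h : gT) (phi : T -> gT) :
  T -> gT := fun t => (h * phi t * h^-1)%g.

Definition twist (Γ : Grp) (s : GrpAut Γ) (gT : finGroupType) (phi : Γ -> gT) :
  Γ -> gT := fun g => phi (ainv s g).

Definition conj_equiv (T : Type) (gT : finGroupType) (phi psi : T -> gT) :=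
  exists h : gT, psi = conj_hom h phi.

Definition Hom_sigma (Γ : Grp) (s : GrpAut Γ) (gT : finGroupType)
    (phi : Γ -> gT) : Prop :=
  is_hom (@gmul Γ) phi /\ conj_equiv phi (twist s phi).

Definition finite_pred (T : Type) (P : T -> Prop) :=
  exists l : list T, forall x, P x -> List.In x l.

Definition has_card (T : Type) (P : T -> Prop) (n : nat) :=
  exists l : list T, List.NoDup l /\ length l = n /\
    forall x, P x <-> List.In x l.

(* The set of orbits of R (an equivalence) restricted to P has m elements:
   there is a transversal of size m. *)
Definition num_orbits (T : Type) (P : T -> Prop) (R : T -> T -> Prop)
    (m : nat) :=
  exists l : list T, length l = m /\ List.Forall P l /\
    (forall x, P x -> exists y, List.In y l /\ R x y) /\
    (forall i j y z, List.nth_error l i = Some y ->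
       List.nth_error l j = Some z -> R y z -> i = j).

From Pilot Require Import Defs.
From Stdlib Require Import ZArith List Lia.
From mathcomp Require Import all_boot all_fingroup boolp.

Set Implicit Arguments.
Unset Strict Implicit.
Unset Printing Implicit Defensive.

(* A homomorphism ψ : Γ ⋊_σ Z -> G is determined by its restriction
   φ = ψ(-, 0) to Γ and by the image g = ψ(t) of the generator t = (1, 1);
   conversely a pair (φ, g) comes from some ψ exactly when φ is a
   homomorphism and g intertwines φ with σ, i.e. φ(σ δ) g = g φ(δ) for all δ.
   Such a g exists iff φ^σ is conjugate to φ, so the restrictions are exactly
   Hom_σ(Γ, G); for fixed φ the admissible g form a coset of the stabiliser
   of φ under conjugation.  Hence
       #Hom(Γ ⋊_σ Z, G) = Σ_{φ ∈ Hom_σ(Γ, G)} |Stab_G(φ)| = |G| · #(Hom_σ/G)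
   by the Cauchy–Frobenius count.  Finiteness comes from finite generation:
   a homomorphism is determined by its values on a finite generating list. *)

Section GroupLaws.
Variable Γ : Grp.
Implicit Types x y z : Γ.

(* The axioms of [Grp] are left-sided; the right-sided laws follow, since
   x x^-1 is idempotent and the only idempotent is the unit. *)
Lemma gmulVr x : gmul x (ginv x) = gone Γ.
Proof.
have idem : gmul (gmul x (ginv x)) (gmul x (ginv x)) = gmul x (ginv x).
  by rewrite -gmulA (gmulA (ginv x)) gmulV gmul1.
by rewrite -[LHS]gmul1 -(gmulV (gmul x (ginv x))) -gmulA idem.
Qed.

Lemma gmul1r x : gmul x (gone Γ) = x.
Proof. by rewrite -(gmulV x) gmulA gmulVr gmul1. Qed.

Lemma gmulI x : injective (gmul x).
Proof. by move=> y z h; rewrite -(gmul1 y) -(gmul1 z) -(gmulV x) -!gmulA h. Qed.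

Lemma morph_one (f : Γ -> Γ) : {morph f : x y / gmul x y} -> f (gone Γ) = gone Γ.
Proof. by move=> fM; apply: (@gmulI (f (gone Γ))); rewrite -fM gmul1 gmul1r. Qed.

End GroupLaws.

Section AutomorphismPowers.
Variables (Γ : Grp) (s : GrpAut Γ).

Lemma ainvM : {morph ainv s : x y / gmul x y}.
Proof. by move=> x y; apply: (can_inj (afunK s)); rewrite afunM !ainvK. Qed.

Lemma autpowM m : {morph autpow s m : x y / gmul x y}.
Proof.
have iterM f : {morph f : x y / gmul x y} -> forall n, {morph iter n f : x y / gmul x y}.
  by move=> fM; elim=> [|n IH] x y //=; rewrite IH fM.
by case: m => [|p|p] //=; apply: iterM; [exact: afunM | exact: ainvM].
Qed.

Lemma autpow1 m : autpow s m (gone Γ) = gone Γ.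
Proof. exact/morph_one/autpowM. Qed.

Lemma autpow_nat n δ : autpow s (Z.of_nat n) δ = iter n (afun s) δ.
Proof. by case: n => [|n] //=; rewrite SuccNat2Pos.id_succ. Qed.

Lemma autpow_oppnat n δ : autpow s (- Z.of_nat n) δ = iter n (ainv s) δ.
Proof. by case: n => [|n] //=; rewrite SuccNat2Pos.id_succ. Qed.

Lemma iter_afunK n δ : iter n (afun s) (iter n (ainv s) δ) = δ.
Proof. by elim: n => [|n IH] //; rewrite iterSr iterS ainvK. Qed.

Lemma sd_mul11 : sd_mul s (sd_one Γ) (sd_one Γ) = sd_one Γ.
Proof. by rewrite /sd_mul /sd_one /= gmul1. Qed.

Lemma sd_mulV x : sd_mul s (sd_inv s x) x = sd_one Γ.
Proof.
by rewrite /sd_mul /sd_inv /sd_one /= -autpowM gmulV autpow1 Z.add_opp_diag_l.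
Qed.

End AutomorphismPowers.

Section HomsToFiniteGroups.
Variables (T : Type) (mul : T -> T -> T) (one : T) (inv : T -> T).
Variable gT : finGroupType.
Hypothesis mul11 : mul one one = one.
Hypothesis mulV : forall x, mul (inv x) x = one.
Local Open Scope group_scope.

Lemma hom1 (f : T -> gT) : is_hom mul f -> f one = 1.
Proof. by move=> fM; apply: (mulgI (f one)); rewrite -fM mul11 mulg1. Qed.

Lemma homV (f : T -> gT) x : is_hom mul f -> f (inv x) = (f x)^-1.
Proof. by move=> fM; apply: (mulIg (f x)); rewrite -fM mulV (hom1 fM) mulVg. Qed.

Lemma homs_agree_on_generated (f g : T -> gT) S :
  is_hom mul f -> is_hom mul g -> (forall x, List.In x S -> f x = g x) ->
  forall x, Defs.generated mul one inv S x -> f x = g x.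
Proof.
move=> fM gM eqS x; elim=> [y /eqS //||y z _ IHy _ IHz|y _ IH].
- by rewrite (hom1 fM) (hom1 gM).
- by rewrite fM gM IHy IHz.
- by rewrite (homV _ fM) (homV _ gM) IH.
Qed.

End HomsToFiniteGroups.

Lemma finite_of_code (U : eqType) (fT : finType) (P : U -> Prop) (c : U -> fT) :
  (forall u v, P u -> P v -> c u = c v -> u = v) ->
  exists l : seq U, forall u, P u <-> u \in l.
Proof.
move=> c_inj.
pose dec k : option U :=
  if pselect (exists u, P u /\ c u = k) is left e then Some (sval (cid e)) else None.
exists (pmap dec (enum fT)) => u; rewrite mem_pmap; split.
- move=> Pu; apply/mapP; exists (c u); first by rewrite mem_enum.
  rewrite /dec; case: pselect => [e|]; last by case; exists u.
  by case: (cid e) => v [Pv cv] /=; rewrite (c_inj u v Pu Pv (esym cv)).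
- case/mapP => k _; rewrite /dec; case: pselect => // e [->].
  by case: (cid e) => v [].
Qed.

(* A finitely generated Γ ⋊_σ Z has finitely many homomorphisms to a finite
   group, each being determined by its values on the generating list. *)
Lemma finite_homs (Γ : Grp) (s : GrpAut Γ) (gT : finGroupType) (S : list (Γ * Z)) :
  (forall x, Defs.generated (sd_mul s) (sd_one Γ) (sd_inv s) S x) ->
  exists l : seq ((Γ * Z)%type -> gT), forall ψ, is_hom (sd_mul s) ψ <-> ψ \in l.
Proof.
move=> genS.
apply: (@finite_of_code _ _ _ (fun ψ => [ffun i : 'I_(length S) => ψ (List.nth i S (sd_one Γ))])).
move=> ψ1 ψ2 h1 h2 /ffunP eq12; apply: funext => x.
apply: (homs_agree_on_generated (sd_mul11 s) (@sd_mulV _ s) h1 h2 _ (genS x)).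
move=> y /(In_nth _ _ (sd_one Γ)) [i [/ltP lti <-]].
by have := eq12 (Ordinal lti); rewrite !ffunE.
Qed.

Section IntegerPowers.
Variable gT : finGroupType.
Local Open Scope group_scope.

Definition zpow (g : gT) (m : Z) : gT :=
  match m with
  | Z0 => 1
  | Zpos p => g ^+ Pos.to_nat p
  | Zneg p => g ^- Pos.to_nat p
  end.

Lemma Z_nat_or_oppnat (m : Z) : exists n, m = Z.of_nat n \/ m = (- Z.of_nat n)%Z.
Proof. by exists (Z.abs_nat m); lia. Qed.

Lemma zpow_nat g n : zpow g (Z.of_nat n) = g ^+ n.
Proof. by case: n => [|n] //=; rewrite SuccNat2Pos.id_succ. Qed.

Lemma zpow_oppnat g n : zpow g (- Z.of_nat n) = g ^- n.
Proof. by case: n => [|n] /=; [rewrite invg1 | rewrite SuccNat2Pos.id_succ]. Qed.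

Lemma zpowS g k : zpow g (k + 1) = zpow g k * g.
Proof.
have [n [->|->]] := Z_nat_or_oppnat k.
  have -> : (Z.of_nat n + 1 = Z.of_nat n.+1)%Z by lia.
  by rewrite !zpow_nat expgSr.
case: n => [|n]; first by rewrite /= mul1g expg1.
have -> : (- Z.of_nat n.+1 + 1 = - Z.of_nat n)%Z by lia.
by rewrite !zpow_oppnat expgS invMg -mulgA mulVg mulg1.
Qed.

Lemma zpowD g m n : zpow g (m + n) = zpow g m * zpow g n.
Proof.
elim/Z.peano_ind: n => [|n IH|n IH].
- by rewrite Z.add_0_r mulg1.
- by rewrite -!Z.add_1_r Z.add_assoc !zpowS IH mulgA.
- apply: (@mulIg _ g); rewrite -zpowS -mulgA -zpowS.
  by rewrite -Z.add_assoc !Z.add_1_r !Z.succ_pred IH.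
Qed.

End IntegerPowers.

Section RestrictionExtension.
Variables (Γ : Grp) (s : GrpAut Γ) (gT : finGroupType).
Local Open Scope group_scope.

(* g intertwines φ with σ: φ(σ δ) g = g φ(δ).  Equivalently g^-1 conjugates
   φ to φ^σ, and g is a possible image of the generator t. *)
Definition intertwines (φ : Γ -> gT) (g : gT) := forall δ, φ (afun s δ) * g = g * φ δ.

Definition tgen : Γ * Z := (gone Γ, 1%Z).

Definition extend (φ : Γ -> gT) (g : gT) : (Γ * Z)%type -> gT :=
  fun x => φ x.1 * zpow g x.2.
Definition restrict (ψ : (Γ * Z)%type -> gT) : Γ -> gT := fun γ => ψ (γ, 0%Z).

Lemma Hom_sigmaE (φ : Γ -> gT) :
  Hom_sigma s φ <-> is_hom (@gmul Γ) φ /\ exists g, intertwines φ g.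
Proof.
rewrite /Hom_sigma; split; case=> φM conjφ; split=> //.
- case: conjφ => h eqh; exists h^-1 => δ.
  have := congr1 (fun f => f (afun s δ)) eqh; rewrite /twist /conj_hom afunK => ->.
  by rewrite -!mulgA mulKg.
- case: conjφ => g gφ; exists g^-1; apply: funext => γ.
  rewrite /twist /conj_hom invgK; have := gφ (ainv s γ).
  by rewrite ainvK -mulgA => ->; rewrite mulKg.
Qed.

Section Extension.
Variable φ : Γ -> gT.
Hypothesis φM : is_hom (@gmul Γ) φ.

Lemma intertwines_zpow g : intertwines φ g ->
  forall m δ, φ (autpow s m δ) * zpow g m = zpow g m * φ δ.
Proof.
move=> gφ; have pos n δ : φ (iter n (afun s) δ) * g ^+ n = g ^+ n * φ δ.
  elim: n δ => [|n IH] δ; first by rewrite mulg1 mul1g.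
  by rewrite iterS expgS mulgA gφ -mulgA IH mulgA.
move=> m δ; have [n [->|->]] := Z_nat_or_oppnat m.
  by rewrite autpow_nat zpow_nat pos.
rewrite autpow_oppnat zpow_oppnat.
have := pos n (iter n (ainv s) δ); rewrite iter_afunK => posn.
have -> : φ (iter n (ainv s) δ) = (g ^+ n)^-1 * (φ δ * g ^+ n) by rewrite posn mulKg.
by rewrite -mulgA mulgK.
Qed.

Lemma extend_hom g : intertwines φ g -> is_hom (sd_mul s) (extend φ g).
Proof.
move=> gφ x y; rewrite /extend /sd_mul /= φM zpowD.
by rewrite !mulgA -(mulgA (φ x.1)) intertwines_zpow // !mulgA.
Qed.

Lemma extend_tgen g : extend φ g tgen = g.
Proof. by rewrite /extend /= (hom1 (gmul1 _) φM) mul1g expg1. Qed.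

End Extension.

Lemma restrict_extend φ g : restrict (extend φ g) = φ.
Proof. by apply: funext => γ; rewrite /restrict /extend /= mulg1. Qed.

Section Restriction.
Variable ψ : (Γ * Z)%type -> gT.
Hypothesis ψM : is_hom (sd_mul s) ψ.

Lemma restrict_hom : is_hom (@gmul Γ) (restrict ψ).
Proof. by move=> x y; rewrite /restrict -ψM. Qed.

Lemma restrict_intertwines : intertwines (restrict ψ) (ψ tgen).
Proof. by move=> δ; rewrite /restrict -!ψM /sd_mul /= gmul1 gmul1r. Qed.

Lemma hom_tpow m : ψ (gone Γ, m) = zpow (ψ tgen) m.
Proof.
have ψS k : ψ (gone Γ, (k + 1)%Z) = ψ (gone Γ, k) * ψ tgen.
  by rewrite -ψM /sd_mul /= autpow1 gmul1.
elim/Z.peano_ind: m => [|m IH|m IH].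
- exact: (hom1 (sd_mul11 s) ψM).
- by rewrite -Z.add_1_r ψS IH zpowS.
- apply: (@mulIg _ (ψ tgen)); rewrite -ψS -zpowS.
  by rewrite Z.add_1_r Z.succ_pred IH.
Qed.

Lemma extend_restrict : extend (restrict ψ) (ψ tgen) = ψ.
Proof.
by apply: funext => -[γ m]; rewrite /extend /restrict /= -hom_tpow -ψM /sd_mul /= gmul1r.
Qed.

End Restriction.

Lemma finite_Hom_sigma (lhom : seq ((Γ * Z)%type -> gT)) :
  (forall ψ, is_hom (sd_mul s) ψ <-> ψ \in lhom) ->
  forall φ, Hom_sigma s φ <-> φ \in map restrict lhom.
Proof.
move=> mem_lhom φ; rewrite Hom_sigmaE; split.
- case=> φM [g gφ]; apply/mapP; exists (extend φ g); last by rewrite restrict_extend.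
  exact/mem_lhom/extend_hom.
- case/mapP => ψ /mem_lhom ψM ->; split; first exact: restrict_hom.
  by exists (ψ tgen); apply: restrict_intertwines.
Qed.

End RestrictionExtension.

Arguments tgen {Γ}.
Arguments restrict {Γ gT} ψ γ.

Lemma In_mem (T : eqType) (x : T) (l : seq T) : List.In x l <-> x \in l.
Proof.
elim: l => [|y l IH] //=; rewrite in_cons.
split=> [[->|/IH ->] | /orP[/eqP ->|/IH]]; rewrite ?eqxx ?orbT; auto.
Qed.

Lemma uniq_NoDup (T : eqType) (l : seq T) : uniq l -> List.NoDup l.
Proof.
elim: l => [|y l IH] /=; first by constructor.
by case/andP => /negP yl /IH; constructor=> // /In_mem.
Qed.

Section OrbitCounting.
Variables (gT : finGroupType) (X : finType) (to : {action gT &-> X}).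
Local Open Scope group_scope.
Local Notation orbits := (orbit to [set: gT] @: [set: X]).

Lemma acts_setT : [acts [set: gT], on [set: X] | to].
Proof. by apply/actsP => a _ x; rewrite !inE. Qed.

(* The stabiliser orders add up to |G| per orbit: both sides count the pairs
   (x, a) with a fixing x (Cauchy–Frobenius). *)
Lemma sum_card_stab : \sum_(x : X) #|'C[x | to]| = (#|orbits| * #|gT|)%N.
Proof.
rewrite -cardsT -(Frobenius_Cauchy acts_setT).
transitivity (\sum_(x : X) \sum_(a : gT) (to x a == x : nat)).
  apply: eq_bigr => x _; rewrite -sum1_card big_mkcond; apply: eq_bigr => a _.
  by rewrite (sameP astab1P eqP).
rewrite exchange_big; apply: eq_big => [a | a _]; first by rewrite inE.
rewrite -sum1_card [RHS]big_mkcond; apply: eq_bigr => x _.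
by rewrite inE in_setT (sameP afix1P eqP).
Qed.

Lemma num_orbits_of_action (U : eqType) (P : U -> Prop) (R : U -> U -> Prop)
    (v : X -> U) :
  injective v -> (forall u, P u <-> exists x, v x = u) ->
  (forall x y, R (v x) (v y) <-> y \in orbit to [set: gT] x) ->
  num_orbits P R #|orbits|.
Proof.
move=> v_inj Pv Rv; have [trT _ sameT reprT] := orbit_transversalP acts_setT.
set T := orbit_transversal _ _ _ in trT sameT reprT.
have memT u : List.In u (map v (enum T)) <-> exists2 x, x \in T & u = v x.
  rewrite In_mem; split=> [/mapP[x Tx ->] | [x Tx ->]]; last by rewrite map_f ?mem_enum.
  by exists x; rewrite // -mem_enum.
exists (map v (enum T)); split; [|split; [|split]].
- by rewrite -(card_transversal trT) cardE; exact: length_map.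
- by apply/Forall_forall => u /memT [x _ ->]; apply/Pv; exists x.
- move=> u /Pv [x <-]; have [a _ Txa] := reprT x (in_setT x).
  exists (v (to x a)); split; first by apply/memT; exists (to x a).
  by apply/Rv; rewrite mem_orbit ?inE.
- move=> i j y z hi hj Ryz.
  have /memT [y' Ty' eyy'] := nth_error_In _ _ hi.
  have /memT [z' Tz' ezz'] := nth_error_In _ _ hj.
  have eyz : y = z.
    by rewrite eyy' ezz'; congr v; apply/eqP; rewrite -sameT //; apply/Rv; rewrite -eyy' -ezz'.
  have nd : List.NoDup (map v (enum T)).
    by apply/uniq_NoDup; rewrite map_inj_uniq ?enum_uniq.
  apply: (proj1 (NoDup_nth_error _) nd); first by apply/nth_error_Some; rewrite hi.
  by rewrite hi hj eyz.
Qed.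

End OrbitCounting.

Section ConjugationAction.
Variables (Γ : Grp) (s : GrpAut Γ) (gT : finGroupType).
Variable lsig : seq (Γ -> gT).
Hypothesis mem_lsig : forall φ, Hom_sigma s φ <-> φ \in lsig.
Local Open Scope group_scope.

(* Hom_σ(Γ, G) is stable under conjugation: if g intertwines φ with σ,
   then a g a^-1 intertwines a φ a^-1. *)
Lemma conj_Hom_sigma (φ : Γ -> gT) a : Hom_sigma s φ -> Hom_sigma s (conj_hom a φ).
Proof.
rewrite !Hom_sigmaE => -[φM [g gφ]]; split.
  by move=> x y; rewrite /conj_hom φM !mulgA mulgKV.
exists (a * g * a^-1) => δ; rewrite /conj_hom !mulgA !mulgKV.
by rewrite -(mulgA a (φ _) g) gφ !mulgA.
Qed.

Definition HomS := seq_sub lsig.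

Lemma HomS_spec (x : HomS) : is_hom (@gmul Γ) (val x) /\ exists g, intertwines s (val x) g.
Proof. exact/Hom_sigmaE/mem_lsig/valP. Qed.

Definition conj_act_fun (x : HomS) (a : gT) : HomS := insubd x (conj_hom a^-1 (val x)).

Lemma conj_actE x a : val (conj_act_fun x a) = conj_hom a^-1 (val x).
Proof. by apply: insubdK; apply/mem_lsig/conj_Hom_sigma/mem_lsig/valP. Qed.

Lemma conj_act1 : conj_act_fun^~ 1 =1 id.
Proof.
move=> x; apply: val_inj; rewrite conj_actE; apply: funext => t.
by rewrite /conj_hom invg1 mul1g invg1 mulg1.
Qed.

Lemma conj_actM x : act_morph conj_act_fun x.
Proof.
move=> a b; apply: val_inj; rewrite !conj_actE; apply: funext => t.
by rewrite /conj_hom !invgK invMg !mulgA.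
Qed.

Definition conj_act := TotalAction conj_act1 conj_actM.

Lemma conj_equiv_orbit (x y : HomS) :
  conj_equiv (val x) (val y) <-> y \in orbit conj_act [set: gT] x.
Proof.
split=> [[h eqh] | /orbitP[a _ <-]].
  by apply/orbitP; exists h^-1; rewrite ?inE //; apply: val_inj; rewrite conj_actE invgK.
by exists a^-1; rewrite conj_actE.
Qed.

Definition intertwiners (x : HomS) : {set gT} := [set g | `[< intertwines s (val x) g >]].

Lemma intertwiners_coset x g0 : g0 \in intertwiners x ->
  intertwiners x = [set g0 * c | c in 'C[x | conj_act]].
Proof.
rewrite inE => /asboolP g0x; apply/setP => g; rewrite inE.
have centE c : c \in 'C[x | conj_act] <-> forall t, val x t * c = c * val x t.
  rewrite (sameP astab1P eqP) -(inj_eq val_inj) conj_actE; split.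
    by move=> /eqP cx t; rewrite -{2}cx /conj_hom invgK -!mulgA mulKVg.
  by move=> cx; apply/eqP/funext => t; rewrite /conj_hom invgK -mulgA cx mulKg.
have cosetE c : intertwines s (val x) (g0 * c) <-> forall t, val x t * c = c * val x t.
  split=> cx δ; first by have := cx δ; rewrite mulgA g0x -!mulgA => /mulgI.
  by rewrite mulgA g0x -!mulgA cx.
apply/asboolP/imsetP => [gx | [c /centE cx ->]]; last exact/cosetE.
by exists (g0^-1 * g); rewrite ?mulKVg //; apply/centE/cosetE; rewrite mulKVg.
Qed.

Lemma card_intertwiners x : #|intertwiners x| = #|'C[x | conj_act]|.
Proof.
have [_ [g0 g0x]] := HomS_spec x.
by rewrite (@intertwiners_coset x g0) ?inE ?asboolT // card_imset //; apply: mulgI.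
Qed.

Definition admissible : {set HomS * gT} := [set p | p.2 \in intertwiners p.1].
Definition hom_of_pair (p : HomS * gT) := extend (val p.1) p.2.

Lemma hom_of_pair_inj : injective hom_of_pair.
Proof.
move=> [x g] [y h] eqxy; have := congr1 restrict eqxy.
have := congr1 (fun ψ => ψ tgen) eqxy; rewrite /hom_of_pair /=.
rewrite !extend_tgen ?restrict_extend; try exact: (proj1 (HomS_spec _)).
by move=> -> /val_inj ->.
Qed.

Lemma is_hom_pairs ψ : is_hom (sd_mul s) ψ <-> ψ \in map hom_of_pair (enum admissible).
Proof.
split=> [ψM | /mapP[[x g]]]; last first.
  rewrite mem_enum !inE => /asboolP gx ->.
  exact: (extend_hom (proj1 (HomS_spec x))).
have mem_res : restrict ψ \in lsig.
  by apply/mem_lsig/Hom_sigmaE; split; [exact: restrict_hom | exists (ψ tgen); exact: restrict_intertwines].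
apply/mapP; exists (Sub (restrict ψ) mem_res, ψ tgen); last by rewrite /hom_of_pair /= (extend_restrict ψM).
by rewrite mem_enum !inE; apply/asboolP; exact: restrict_intertwines.
Qed.

Lemma has_card_homs : has_card (@is_hom _ (sd_mul s) gT) #|admissible|.
Proof.
exists (map hom_of_pair (enum admissible)); split; last split.
- by apply/uniq_NoDup; rewrite map_inj_uniq ?enum_uniq //; exact: hom_of_pair_inj.
- by rewrite cardE; exact: length_map.
- by move=> ψ; rewrite In_mem; exact: is_hom_pairs.
Qed.

Lemma card_admissible : #|admissible| = \sum_(x : HomS) #|'C[x | conj_act]|.
Proof.
rewrite -sum1_card (eq_bigl (fun p => xpredT p.1 && (p.2 \in intertwiners p.1))); last first.
  by move=> p; rewrite inE.
rewrite -(pair_big_dep xpredT (fun x g => g \in intertwiners x) (fun _ _ => 1%N)).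
by apply: eq_bigr => x _; rewrite -card_intertwiners -sum1_card.
Qed.

End ConjugationAction.

Theorem corollary3p2 (Γ : Grp) (s : GrpAut Γ) (gT : finGroupType)
  (Hfg : fingen (sd_mul s) (sd_one Γ) (sd_inv s)) :
  finite_pred (@Hom_sigma Γ s gT) /\
  exists n m : nat,
    has_card (@is_hom (prod (gcar Γ) Z) (sd_mul s) gT) n /\
    num_orbits (@Hom_sigma Γ s gT) (@conj_equiv Γ gT) m /\
    n = (#|gT| * m)%N /\ (#|gT| %| n)%N.
Proof.
case: Hfg => S genS.
have [lhom mem_lhom] := finite_homs gT genS.
have mem_lsig := finite_Hom_sigma mem_lhom; set lsig := map restrict lhom in mem_lsig.
split; first by exists lsig => φ /mem_lsig /In_mem.
set m := #|orbit (conj_act mem_lsig) [set: gT] @: [set: HomS lsig]|.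
have card_homs : #|admissible s lsig| = (#|gT| * m)%N.
  by rewrite (card_admissible mem_lsig) sum_card_stab mulnC.
exists #|admissible s lsig|, m; split; [|split; [|split]].
- exact: has_card_homs.
- apply: num_orbits_of_action val_inj _ (conj_equiv_orbit mem_lsig) => φ.
  rewrite mem_lsig; split=> [φl | [x <-]]; [by exists (Sub φ φl) | exact: valP].
- exact: card_homs.
- by rewrite card_homs dvdn_mulr.
Qed.
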